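(* Let $T^4=\mathbb{R}^4/\mathbb{Z}^{4}$, and let $G$ be a constant Riemannian metric and $B$ a constant real $2$-form on $T^4$ whose components $G_{IJ}$, $B_{IJ}$ in the standard coordinates are all rational numbers (i.e. the $\mathcal N=(1,1)$ SCFT with data $(T^4;G,B)$ is rational). Then there exists a constant complex structure $I$ on $T^4$ such that: $G$ is compatible with $I$; the complex torus $(T^4,I)$ is polarizable; and the cohomology class of $B$ has only a Hodge $(1,1)$ component with respect to $I$. In particular, $B$ lies in the algebraic part $H^2(T^4;\mathbb{Q})\cap H^{1,1}((T^4,I);\mathbb{R})$.
   Context: $T^4=\mathbb{R}^4/\mathbb{Z}^4$ with coordinates $X^1,\dots,X^4$, units normalized so that the lattice is $H_1(T^4;\mathbb{Z})=\mathbb{Z}^4$ and $2\pi\sqrt{\alpha'}=1$. $G=G_{IJ}dX^I\otimes dX^J$ with constant $G_{IJ}$, $B=\frac12 B_{IJ}dX^I\wedge dX^J$ with constant $B_{IJ}$. By the known classification, the $\mathcal N=(1,1)$ SCFT (nonlinear sigma model) for $(T^4;G,B)$ is rational iff all $G_{IJ},B_{IJ}\in\mathbb{Q}$. A constant complex structure $I$ ($I^2=-1$ on $\mathbb{R}^4$) is compatible with $G$ if $G(Iu,Iv)=G(u,v)$. The complex torus $(T^4,I)$ is polarizable if there is a class $\psi\in H^2(T^4;\mathbb{Z})\cap H^{1,1}$ such that $(u,v)\mapsto\psi(Iu,v)$ is positive definite on $H_1(T^4;\mathbb{R})$. Hodge types of classes in $H^2(T^4;\mathbb{C})$ are taken with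 respect to $I$. *)

(* Real vector space R^4 = H_1(T^4;R) with lattice Z^4 = the
   standard basis; vectors are column vectors 'cV[R]_4, bilinear forms
   (constant tensors on T^4) are 4x4 matrices M with b(u,v) = u^T M v. *)
From HB Require Import structures.
From mathcomp Require Import all_boot all_order all_algebra.
From mathcomp Require Import reals.
Set Implicit Arguments. Unset Strict Implicit. Unset Printing Implicit Defensive.
Import Order.TTheory GRing.Theory Num.Theory.
Local Open Scope ring_scope.

Section T4.
Variable R : realType.

Definition bform (M : 'M[R]_4) (u v : 'cV[R]_4) : R := (u^T *m M *m v) 0 0.

Definition posdef_bil (b : 'cV[R]_4 -> 'cV[R]_4 -> R) : Prop :=
  (forall u v, b u v = b v u) /\ (forall u, u != 0 -> 0 < b u u).

Definition is_metric (G : 'M[R]_4) : Prop := posdef_bil (bform G).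

(* constant real 2-form B = 1/2 B_IJ dX^I /\ dX^J, B(u,v) = u^T B v, B_IJ = -B_JI *)
Definition is_2form (B : 'M[R]_4) : Prop := B^T = - B.

Definition rational_mx (M : 'M[R]_4) : Prop :=
  forall i j, exists q : rat, M i j = ratr q.

(* integral class: integer values on pairs of lattice vectors *)
Definition integral_mx (M : 'M[R]_4) : Prop :=
  forall i j, exists z : int, M i j = z%:~R.

Definition complex_structure (I : 'M[R]_4) : Prop := I *m I = - 1%:M.

Definition compatible (G I : 'M[R]_4) : Prop :=
  forall u v, bform G (I *m u) (I *m v) = bform G u v.

(* a real (constant) 2-form W has only a Hodge (1,1) component w.r.t. I,
   i.e. its (2,0)+(0,2) part vanishes; for real forms this is
   W(Iu, Iv) = W(u, v). *)
Definition hodge11 (I W : 'M[R]_4) : Prop :=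
  forall u v, bform W (I *m u) (I *m v) = bform W u v.

Definition polarizable (I : 'M[R]_4) : Prop :=
  exists Psi : 'M[R]_4,
    [/\ is_2form Psi, integral_mx Psi, hodge11 I Psi &
        posdef_bil (fun u v => bform Psi (I *m u) v)].

End T4.

From mathcomp Require Import all_boot all_order all_algebra.
From mathcomp Require Import reals.
From mathcomp Require Import ring.

(** Work in a G-orthonormal frame L (Gram-Schmidt).  There a rational 2-form Psi
    becomes a skew matrix X, and any nondegenerate skew X has a polar decomposition
    X = J |X| whose orthogonal factor J is a complex structure commuting with
    everything that commutes with X, and with J^T X positive definite.  Transported
    back, J is G-compatible, Psi is a polarization and every 2-form whose frame matrix
    commutes with X is of type (1,1).  It remains to find a rational Psi whose frame
    matrix X is nondegenerate and commutes with the frame matrix Z of B: B itself if B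
    is nondegenerate, the standard symplectic form if B = 0, and otherwise
    B + G B' G with B' the coordinate Hodge dual of B: in the frame it becomes
    Z + c Z' with Z' the Hodge dual of Z and c = 1 / det L, and its Pfaffian
    c |Z|^2 is nonzero. *)

Set Implicit Arguments.
Unset Strict Implicit.
Unset Printing Implicit Defensive.
Import Order.TTheory GRing.Theory Num.Theory.
Local Open Scope ring_scope.

Section NatIndexedMatrices.
Variable R : comNzRingType.

(* Laplace expansion along the first row; unlike [\det], it reduces by [simpl] once
   [n] is a numeral, which turns 4x4 determinant identities into ring identities. *)
Fixpoint detn n (f : nat -> nat -> R) : R :=
  if n is n'.+1 then
    foldr (fun j s => (-1) ^+ j * f 0%N j * detn n' (fun i k => f i.+1 (bump j k)) + s)
      0 (iota 0 n)
  else 1.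

Lemma det_natmx n (f : nat -> nat -> R) : \det (\matrix_(i < n, j < n) f i j) = detn n f.
Proof.
elim: n f => [|n IHn] f; first exact: det_mx00.
transitivity (\sum_(0 <= j < n.+1) (-1) ^+ j * f 0%N j * detn n (fun i k => f i.+1 (bump j k))).
  rewrite big_mkord (expand_det_row _ ord0); apply: eq_bigr => j _.
  rewrite /cofactor add0n mxE mulrCA mulrA -IHn; congr (_ * \det _).
  by apply/matrixP => i k; rewrite !mxE.
by rewrite unlock /index_iota subn0.
Qed.

Definition mx4 (f : nat -> nat -> R) : 'M[R]_4 := \matrix_(i, j) f i j.

Lemma mx4E (X : 'M[R]_4) : X = mx4 (fun i j => X (inord i) (inord j)).
Proof. by apply/matrixP => i j; rewrite !mxE !inord_val. Qed.

Lemma mx4_eq f g : (forall i j, (i < 4)%N -> (j < 4)%N -> f i j = g i j) -> mx4 f = mx4 g.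
Proof. by move=> fg; apply/matrixP => i j; rewrite !mxE fg. Qed.

Lemma mx4M f g : mx4 f *m mx4 g =
  mx4 (fun i j => f i 0%N * g 0%N j + f i 1%N * g 1%N j + f i 2%N * g 2%N j + f i 3%N * g 3%N j).
Proof. by apply/matrixP => i j; rewrite !mxE !big_ord_recl big_ord0 !mxE /= addr0 !addrA. Qed.

Lemma mx4D f g : mx4 f + mx4 g = mx4 (fun i j => f i j + g i j).
Proof. by apply/matrixP => i j; rewrite !mxE. Qed.

Lemma mx4N f : - mx4 f = mx4 (fun i j => - f i j).
Proof. by apply/matrixP => i j; rewrite !mxE. Qed.

Lemma mx4Z a f : a *: mx4 f = mx4 (fun i j => a * f i j).
Proof. by apply/matrixP => i j; rewrite !mxE. Qed.

Lemma mx4T f : (mx4 f)^T = mx4 (fun i j => f j i).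
Proof. by apply/matrixP => i j; rewrite !mxE. Qed.

Lemma mx4C a : a%:M = mx4 (fun i j => if i == j then a else 0).
Proof. by apply/matrixP => i j; rewrite !mxE -[(nat_of_ord i == _)]/(i == j); case: (i == j). Qed.

Lemma mx4_0 : 0 = mx4 (fun _ _ => 0).
Proof. by apply/matrixP => i j; rewrite !mxE. Qed.

Lemma det_mx4 f : \det (mx4 f) = detn 4 f.
Proof. exact: det_natmx. Qed.

End NatIndexedMatrices.

Ltac mx4_ring :=
  rewrite ?mx4_0 ?mx4C ?det_mx4 /= /bump /= ?addnE /=;
  rewrite ?(mx4M, mx4D, mx4N, mx4Z, mx4T);
  apply: mx4_eq => -[|[|[|[|?]]]] [|[|[|[|?]]]] ? ? //;
  cbn -[GRing.add GRing.mul GRing.opp GRing.exp GRing.inv]; ring.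

Section SkewForms4.
Variable R : numDomainType.
Implicit Types (X L : 'M[R]_4) (a b c d e f : R).

Definition skew4 a b c d e f : 'M[R]_4 := mx4 (fun i j =>
  match i, j with
  | 0, 1 => a | 1, 0 => - a | 0, 2 => b | 2, 0 => - b | 0, 3 => c | 3, 0 => - c
  | 1, 2 => d | 2, 1 => - d | 1, 3 => e | 3, 1 => - e | 2, 3 => f | 3, 2 => - f
  | _, _ => 0%R end)%N.

Definition pfaff X : R :=
  let x i j := X (inord i) (inord j) in x 0 1 * x 2 3 - x 0 2 * x 1 3 + x 0 3 * x 1 2.

Definition hodge X : 'M[R]_4 :=
  let x i j := X (inord i) (inord j) in skew4 (x 2 3) (- x 1 3) (x 1 2) (x 0 3) (- x 0 2) (x 0 1).

Definition sqnorm X : R :=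
  let x i j := X (inord i) (inord j) in
  x 0 1 ^+ 2 + x 0 2 ^+ 2 + x 0 3 ^+ 2 + x 1 2 ^+ 2 + x 1 3 ^+ 2 + x 2 3 ^+ 2.

Lemma skew4E X : X^T = - X ->
  let x i j := X (inord i) (inord j) in X = skew4 (x 0 1) (x 0 2) (x 0 3) (x 1 2) (x 1 3) (x 2 3).
Proof.
move=> X_skew x; have xN i j : X j i = - X i j.
  by have /matrixP/(_ i j) := X_skew; rewrite !mxE.
have x0 i : X i i = 0 by apply/eqP; rewrite -eqNr -xN.
rewrite {1}(mx4E X); apply: mx4_eq => -[|[|[|[|?]]]] [|[|[|[|?]]]] ? ? //=;
  by rewrite ?x0 // xN.
Qed.

Lemma pfaff_skew4 a b c d e f : pfaff (skew4 a b c d e f) = a * f - b * e + c * d.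
Proof. by rewrite /pfaff /skew4 !mxE !inordK. Qed.

Lemma hodge_skew4 a b c d e f : hodge (skew4 a b c d e f) = skew4 f (- e) d c (- b) a.
Proof. by rewrite /hodge /skew4 !mxE !inordK. Qed.

Lemma sqnorm_skew4 a b c d e f :
  sqnorm (skew4 a b c d e f) = a ^+ 2 + b ^+ 2 + c ^+ 2 + d ^+ 2 + e ^+ 2 + f ^+ 2.
Proof. by rewrite /sqnorm /skew4 !mxE !inordK. Qed.

Lemma tr_skew4 a b c d e f : (skew4 a b c d e f)^T = - skew4 a b c d e f.
Proof. rewrite /skew4; mx4_ring. Qed.

Lemma tr_hodge X : (hodge X)^T = - hodge X.
Proof. exact: tr_skew4. Qed.

Lemma skew4_quartic X : X^T = - X ->
  X ^+ 4 + sqnorm X *: X ^+ 2 + (pfaff X ^+ 2)%:M = 0.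
Proof.
move/skew4E => ->; rewrite sqnorm_skew4 pfaff_skew4 !exprS expr0 mulr1 -!mulmxE /skew4.
mx4_ring.
Qed.

Lemma mul_hodge X : X^T = - X -> X *m hodge X = (- pfaff X)%:M.
Proof. move/skew4E => ->; rewrite hodge_skew4 pfaff_skew4 /skew4; mx4_ring. Qed.

Lemma hodge_mul X : X^T = - X -> hodge X *m X = (- pfaff X)%:M.
Proof. move/skew4E => ->; rewrite hodge_skew4 pfaff_skew4 /skew4; mx4_ring. Qed.

Lemma pfaff_hodgeD X m : pfaff (X + m *: hodge X) = (1 + m ^+ 2) * pfaff X + m * sqnorm X.
Proof.
by rewrite /pfaff /sqnorm /hodge /skew4 !mxE !inordK //=; ring.
Qed.

Lemma pfaff_mx4 (g : nat -> nat -> R) :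
  pfaff (mx4 g) = g 0 1 * g 2 3 - g 0 2 * g 1 3 + g 0 3 * g 1 2.
Proof. by rewrite /pfaff !mxE !inordK. Qed.

Lemma hodge_mx4 (g : nat -> nat -> R) :
  hodge (mx4 g) = skew4 (g 2 3) (- g 1 3) (g 1 2) (g 0 3) (- g 0 2) (g 0 1).
Proof. by rewrite /hodge !mxE !inordK. Qed.

Lemma pfaff_congr L X : X^T = - X -> pfaff (L^T *m X *m L) = \det L * pfaff X.
Proof.
have [l ->] : exists l, L = mx4 l by exists (fun i j => L (inord i) (inord j)); exact: mx4E.
move/skew4E => ->; rewrite pfaff_skew4 /skew4 mx4T !mx4M pfaff_mx4 det_mx4 /= /bump /= !addnE /=.
ring.
Qed.

Lemma hodge_congr L X : X^T = - X -> L *m hodge (L^T *m X *m L) *m L^T = \det L *: hodge X.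
Proof.
have [l ->] : exists l, L = mx4 l by exists (fun i j => L (inord i) (inord j)); exact: mx4E.
move/skew4E => ->; rewrite hodge_skew4 /skew4 mx4T !mx4M !mxE !inordK //.
mx4_ring.
Qed.

End SkewForms4.

Lemma sqnorm_ge0 (R : realDomainType) (X : 'M[R]_4) : 0 <= sqnorm X.
Proof. by rewrite /sqnorm !addr_ge0 ?sqr_ge0. Qed.

Lemma sqnorm_eq0 (R : realDomainType) (X : 'M[R]_4) : X^T = - X -> (sqnorm X == 0) = (X == 0).
Proof.
move=> X_skew; apply/idP/eqP => [|->]; last by rewrite /sqnorm !mxE expr0n /= !addr0.
rewrite /sqnorm !paddr_eq0 ?addr_ge0 ?sqr_ge0 // !sqrf_eq0.
move=> /andP[/andP[/andP[/andP[/andP[/eqP x01 /eqP x02] /eqP x03] /eqP x12] /eqP x13] /eqP x23].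
by rewrite (skew4E X_skew) x01 x02 x03 x12 x13 x23 /skew4; mx4_ring.
Qed.

Section MapSkew4.
Variables (R S : numDomainType) (f : {rmorphism R -> S}).

Lemma map_skew4 a b c d e g :
  map_mx f (skew4 a b c d e g) = skew4 (f a) (f b) (f c) (f d) (f e) (f g).
Proof.
apply/matrixP => i j; rewrite /skew4 !mxE.
by case: i => -[|[|[|[|?]]]] ?; case: j => -[|[|[|[|?]]]] ? //=; rewrite ?rmorphN ?rmorph0.
Qed.

Lemma map_hodge (X : 'M[R]_4) : map_mx f (hodge X) = hodge (map_mx f X).
Proof. by rewrite /hodge map_skew4 !mxE !rmorphN. Qed.

End MapSkew4.


Section PositiveDefinite.
Variable R : realDomainType.

Definition posdefmx n (A : 'M[R]_n) :=
  A^T = A /\ forall u : 'cV[R]_n, u != 0 -> 0 < (u^T *m A *m u) 0 0.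

Lemma dot_self_ge0 n (u : 'cV[R]_n) : 0 <= (u^T *m u) 0 0.
Proof. by rewrite mxE sumr_ge0 // => i _; rewrite mxE -expr2 sqr_ge0. Qed.

Lemma dot_self_gt0 n (u : 'cV[R]_n) : u != 0 -> 0 < (u^T *m u) 0 0.
Proof.
move=> u_neq0; have [i ui_neq0] : exists i, u i 0 != 0.
  apply/existsP; apply: contraNT u_neq0 => /existsPn u0.
  by apply/eqP/matrixP => i j; rewrite ord1 mxE; apply/eqP/negPn/u0.
rewrite mxE (bigD1 i) //= ltr_pwDl ?sumr_ge0 // => [|j _].
  by rewrite mxE -expr2 exprn_even_gt0.
by rewrite mxE -expr2 sqr_ge0.
Qed.

Lemma posdefmxZ n c (A : 'M[R]_n) : 0 < c -> posdefmx A -> posdefmx (c *: A).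
Proof.
move=> c_gt0 [A_sym A_pos]; split=> [|u /A_pos Au_gt0]; first by rewrite linearZ /= A_sym.
by rewrite -scalemxAr -scalemxAl mxE mulr_gt0.
Qed.

End PositiveDefinite.

Section PolarComplexStructure.
Variables (R : rcfType) (n : nat) (X : 'M[R]_n.+1) (t p : R).
Hypotheses (X_skew : X^T = - X) (t_ge0 : 0 <= t) (p_gt0 : 0 < p).
Hypothesis X_quartic : X ^+ 4 + t *: X ^+ 2 + (p ^+ 2)%:M = 0.

Let s := Num.sqrt (t + 2 * p).
Let quartic : {poly R} := 'X^4 + t *: 'X^2 + (p ^+ 2)%:P.
Let k : {poly R} := 'X^3 + (t + p) *: 'X.

(* J = X (-X^2)^(-1/2): if X has eigenvalues +-i l1, +-i l2 with l1^2 + l2^2 = t and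
   l1 l2 = p, then (x^3 + (t + p) x) / (p (l1 + l2)) maps +-i lk to +-i, and
   (l1 + l2)^2 = t + 2 p. *)
Definition polar_cs := (p * s)^-1 *: horner_mx X k.

Let hX_quartic : horner_mx X quartic = 0.
Proof.
by rewrite -X_quartic /quartic !rmorphD /= horner_mxZ !rmorphXn /= horner_mx_X horner_mx_C.
Qed.

Let s_gt0 : 0 < s.
Proof. by rewrite sqrtr_gt0 ltr_wpDl // mulr_gt0. Qed.

Let s_sqr : s ^+ 2 = t + 2 * p.
Proof. by rewrite sqr_sqrtr // ltW // -sqrtr_gt0. Qed.

Lemma polar_cs_sqr : polar_cs *m polar_cs = - 1%:M.
Proof.
have kk : k * k = quartic * ('X^2 + (t + 2 * p)%:P) - (p ^+ 2 * (t + 2 * p))%:P.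
  by rewrite /k /quartic -!mul_polyC; ring.
rewrite /polar_cs -scalemxAl -scalemxAr scalerA mulmxE -rmorphM /= kk.
rewrite rmorphB rmorphM /= hX_quartic mul0r sub0r horner_mx_C scalerN scale_scalar_mx.
congr (- _%:M); rewrite -s_sqr; field.
by rewrite (gt_eqF s_gt0) (gt_eqF p_gt0).
Qed.

Let horner_k : horner_mx X k = X *m X *m X + (t + p) *: X.
Proof.
rewrite /k rmorphD /= horner_mxZ rmorphXn /= horner_mx_X.
by rewrite !exprS expr0 mulr1 mulrA -!mulmxE.
Qed.

Lemma polar_cs_tr : polar_cs^T = - polar_cs.
Proof.
rewrite /polar_cs horner_k linearZ linearD linearZ /= !trmx_mul X_skew.
by rewrite !(mulmxN, mulNmx) opprK mulmxA scalerN -opprD scalerN.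
Qed.

Lemma polar_cs_comm Y : X *m Y = Y *m X -> polar_cs *m Y = Y *m polar_cs.
Proof.
by move=> XY; rewrite /polar_cs -scalemxAl -scalemxAr; congr (_ *: _); apply: comm_horner_mx.
Qed.

Lemma polar_cs_tr_mul : polar_cs^T *m X = s^-1 *: (p%:M - X *m X).
Proof.
have kX : k * 'X = quartic + p%:P * ('X^2 - p%:P).
  by rewrite /k /quartic -!mul_polyC; ring.
rewrite polar_cs_tr mulNmx /polar_cs -scalemxAl -[X in _ *m X]horner_mx_X mulmxE.
rewrite -rmorphM /= kX rmorphD rmorphM /= hX_quartic add0r horner_mx_C rmorphB /=.
rewrite rmorphXn /= horner_mx_X horner_mx_C expr2 -!mulmxE mul_scalar_mx scalerA -scalerN opprB.
by congr (_ *: _); field; rewrite (gt_eqF s_gt0) (gt_eqF p_gt0).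
Qed.

Lemma polar_cs_posdef : posdefmx (polar_cs^T *m X).
Proof.
rewrite polar_cs_tr_mul; split.
  by rewrite linearZ /= linearB /= tr_scalar_mx trmx_mul X_skew mulmxN mulNmx opprK.
move=> u u_neq0; rewrite -scalemxAr -scalemxAl mxE mulr_gt0 ?invr_gt0 //.
have -> : u^T *m (p%:M - X *m X) *m u = p *: (u^T *m u) + (X *m u)^T *m (X *m u).
  rewrite mulmxBr mulmxBl mul_mx_scalar -scalemxAl trmx_mul X_skew.
  by rewrite mulmxN mulNmx !mulmxA.
by rewrite mxE [in X in 0 < X + _]mxE ltr_wpDr ?dot_self_ge0 // mulr_gt0 // dot_self_gt0.
Qed.

End PolarComplexStructure.

Lemma skew4_polar_cs (R : rcfType) (X : 'M[R]_4) : X^T = - X -> pfaff X != 0 ->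
  exists J : 'M[R]_4, [/\ J *m J = - 1%:M, J^T = - J, posdefmx (J^T *m X) &
    forall Y, X *m Y = Y *m X -> J *m Y = Y *m J].
Proof.
move=> X_skew pfX_neq0.
have X_quartic : X ^+ 4 + sqnorm X *: X ^+ 2 + (`|pfaff X| ^+ 2)%:M = 0.
  by rewrite real_normK ?num_real ?skew4_quartic.
have pX_gt0 : 0 < `|pfaff X| by rewrite normr_gt0.
exists (polar_cs X (sqnorm X) `|pfaff X|); split.
- exact: polar_cs_sqr (sqnorm_ge0 X) pX_gt0 X_quartic.
- exact: polar_cs_tr.
- exact: polar_cs_posdef X_skew (sqnorm_ge0 X) pX_gt0 X_quartic.
- exact: polar_cs_comm.
Qed.

Section OrthonormalFrame.
Variable R : rcfType.

Lemma posdefmx_schur n (a : R) (b : 'rV[R]_n) (D : 'M[R]_n) :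
  posdefmx (block_mx a%:M b b^T D) -> 0 < a /\ posdefmx (D - a^-1 *: (b^T *m b)).
Proof.
case=> G_sym G_pos.
have a_gt0 : 0 < a.
  have /G_pos : col_mx 1%:M 0 != 0 :> 'cV[R]_(1 + n).
    by rewrite col_mx_eq0 negb_and oner_neq0.
  rewrite tr_col_mx tr_scalar_mx trmx0 mul_row_block !mul0mx !addr0 !mul1mx mul_row_col.
  by rewrite mulmx0 addr0 mulmx1 mxE eqxx.
split=> //; split.
  have := G_sym; rewrite tr_block_mx tr_scalar_mx trmxK => /eq_block_mx[_ _ _ DT].
  by rewrite linearB linearZ /= trmx_mul trmxK DT.
move=> u u_neq0.
pose v : 'cV[R]_(1 + n) := col_mx (- a^-1 *: (b *m u)) u.
have /G_pos : v != 0 by rewrite col_mx_eq0 negb_and u_neq0 orbT.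
rewrite tr_col_mx mul_row_block mul_row_col [(_ *: _)^T]linearZ /= trmx_mul.
rewrite -!scalemxAl mul_mx_scalar.
rewrite scalerA mulNr mulVf ?gt_eqF // scaleN1r addNr mul0mx add0r.
rewrite mulmxDl -scalemxAl mulmxBr mulmxBl -scalemxAr -scalemxAl !mulmxA addrC.
by rewrite scaleNr.
Qed.

Lemma posdefmx_frame n (G : 'M[R]_n) : posdefmx G -> exists L : 'M[R]_n, L^T *m G *m L = 1%:M.
Proof.
elim: n G => [|n IHn] G G_pos; first by exists 0; apply/matrixP => -[].
pose a := G 0 0; pose b : 'rV_n := ursubmx (G : 'M_(1 + n)).
pose D := drsubmx (G : 'M_(1 + n)).
have G_block : G = block_mx a%:M b b^T D :> 'M_(1 + n).
  rewrite -[LHS](@submxK _ 1 n 1 n) [ulsubmx _]mx11_scalar /b trmx_ursub G_pos.1 !mxE.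
  by congr (block_mx (G _ _)%:M _ _ _); apply: val_inj.
move: G_pos; rewrite G_block => /posdefmx_schur[a_gt0 /IHn[L' L'_frame]].
pose P : 'M_(1 + n) := block_mx 1%:M (- a^-1 *: b) 0 1%:M.
pose Q : 'M_(1 + n) := block_mx (Num.sqrt a)^-1%:M 0 0 L'.
have PGP : P^T *m block_mx a%:M b b^T D *m P = block_mx a%:M 0 0 (D - a^-1 *: (b^T *m b)).
  have a_neq0 : a != 0 by rewrite gt_eqF.
  have bZ_tr : (- a^-1 *: b)^T = - a^-1 *: b^T by rewrite [LHS]linearZ.
  rewrite /P tr_block_mx !tr_scalar_mx trmx0 !mulmx_block.
  rewrite !(mul0mx, mul1mx, mulmx0, mulmx1, addr0, add0r).
  rewrite bZ_tr mul_scalar_mx mul_mx_scalar -scalemxAl !scalerA mulrN mulfV //.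
  by rewrite !scaleN1r !addNr mul0mx add0r scaleNr addrC.
exists (P *m Q).
have -> : (P *m Q)^T *m block_mx a%:M b b^T D *m (P *m Q) =
    Q^T *m (P^T *m block_mx a%:M b b^T D *m P) *m Q by rewrite trmx_mul !mulmxA.
rewrite PGP /Q tr_block_mx !tr_scalar_mx !trmx0 !mulmx_block.
rewrite !(mul0mx, mulmx0, addr0, add0r) !mul_scalar_mx !scale_scalar_mx L'_frame.
rewrite mul_mx_scalar scale_scalar_mx mulrA -expr2 exprVn sqr_sqrtr ?ltW //.
by rewrite mulVf ?gt_eqF // -scalar_mx_block.
Qed.

End OrthonormalFrame.

Section Rationality.
Variable R : realType.

Lemma rational_mxP (M : 'M[R]_4) : rational_mx M <-> exists Q : 'M[rat]_4, M = map_mx ratr Q.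
Proof.
split=> [M_rat | [Q ->] i j]; last by exists (Q i j); rewrite mxE.
have /fin_all_exists[q qP] : forall ij : 'I_4 * 'I_4, exists q : rat, M ij.1 ij.2 = ratr q.
  by move=> [i j]; apply: M_rat.
by exists (\matrix_(i, j) q (i, j)); apply/matrixP => i j; rewrite !mxE -(qP (i, j)).
Qed.

Lemma rational_mx_int_multiple (M : 'M[R]_4) : rational_mx M ->
  exists2 N : int, 0 < N & integral_mx (N%:~R *: M).
Proof.
case/rational_mxP => Q ->.
exists (\prod_(ij : 'I_4 * 'I_4) denq (Q ij.1 ij.2)).
  by rewrite prodr_gt0 // => ij _; apply: denq_gt0.
move=> i j; rewrite !mxE (bigD1 (i, j)) //= intrM mulrAC.
exists (numq (Q i j) * \prod_(ij | ij != (i, j)) denq (Q ij.1 ij.2)).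
by rewrite intrM -[(numq _)%:~R]ratr_int numqE rmorphM /= ratr_int [ratr _ * _]mulrC.
Qed.

End Rationality.

Lemma congr_skew (R : comNzRingType) n (L P : 'M[R]_n) :
  P^T = - P -> (L^T *m P *m L)^T = - (L^T *m P *m L).
Proof. by move=> P_skew; rewrite !trmx_mul trmxK P_skew mulNmx mulmxN mulmxA. Qed.

Section FrameTransport.
Variables (R : comUnitRingType) (n : nat) (G L J : 'M[R]_n).
Hypotheses (L_frame : L^T *m G *m L = 1%:M) (J_sqr : J *m J = - 1%:M) (J_skew : J^T = - J).

(* The endomorphism with matrix A in the frame L, whose inverse is L^T G. *)
Definition from_frame (A : 'M[R]_n) : 'M[R]_n := L *m A *m (L^T *m G).

Let frameK : L *m (L^T *m G) = 1%:M.
Proof. exact: mulmx1C L_frame. Qed.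

Lemma from_frame_sqr : from_frame J *m from_frame J = - 1%:M.
Proof.
rewrite /from_frame; move: (L_frame) (frameK); move: (L^T *m G) => M ML LM.
rewrite !mulmxA -[L *m J *m M *m L]mulmxA ML mulmx1 -[L *m J *m J]mulmxA J_sqr.
by rewrite mulmxN mulmx1 mulNmx LM.
Qed.

Lemma frame_decomp W : W = (L^T *m G)^T *m (L^T *m W *m L) *m (L^T *m G).
Proof.
move: (frameK); move: (L^T *m G) => M LM.
by rewrite !mulmxA -trmx_mul LM trmx1 mul1mx -mulmxA LM mulmx1.
Qed.

Lemma from_frame_invariant W : J *m (L^T *m W *m L) = L^T *m W *m L *m J ->
  (from_frame J)^T *m W *m from_frame J = W.
Proof.
move=> JY; have JYJ : J^T *m (L^T *m W *m L) *m J = L^T *m W *m L.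
  by rewrite J_skew !mulNmx JY -[_ *m J *m J]mulmxA J_sqr mulmxN mulmx1 opprK.
by rewrite {2}(frame_decomp W) -JYJ /from_frame !trmx_mul !mulmxA.
Qed.

Lemma from_frame_tr_mul W :
  (from_frame J)^T *m W = (L^T *m G)^T *m (J^T *m (L^T *m W *m L)) *m (L^T *m G).
Proof.
rewrite {1}(frame_decomp W) /from_frame; move: (L_frame); move: (L^T *m G) => M ML.
rewrite !trmx_mul !mulmxA -[M^T *m J^T *m L^T *m M^T]mulmxA -[L^T *m M^T]trmx_mul.
by rewrite ML trmx1 mulmx1.
Qed.

End FrameTransport.

Section BilinearForms.
Variable R : realType.
Implicit Types (G P W A L M : 'M[R]_4) (u v : 'cV[R]_4).

Lemma bform_mulmx W A u v : bform W (A *m u) (A *m v) = bform (A^T *m W *m A) u v.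
Proof. by rewrite /bform trmx_mul !mulmxA. Qed.

Lemma bform_mulmxl W A u v : bform W (A *m u) v = bform (A^T *m W) u v.
Proof. by rewrite /bform trmx_mul !mulmxA. Qed.

Lemma bform_delta W i j : bform W (delta_mx i 0) (delta_mx j 0) = W i j.
Proof. by rewrite /bform trmx_delta -rowE -colE !mxE. Qed.

Lemma bform_sym W u v : W^T = W -> bform W u v = bform W v u.
Proof.
move=> W_sym; rewrite /bform.
have -> : (u^T *m W *m v) 0 0 = (u^T *m W *m v)^T 0 0 by rewrite [RHS]mxE.
by rewrite !trmx_mul trmxK W_sym mulmxA.
Qed.

Lemma is_metric_posdefmx G : is_metric G -> posdefmx G.
Proof.
case=> G_sym G_pos; split=> [|u /G_pos //].
by apply/matrixP => i j; rewrite mxE -!bform_delta G_sym.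
Qed.

Lemma posdef_bil_frame P L M (b : 'cV[R]_4 -> 'cV[R]_4 -> R) :
  posdefmx P -> L *m M = 1%:M -> (forall u v, b u v = bform (M^T *m P *m M) u v) ->
  posdef_bil b.
Proof.
case=> P_sym P_pos LM bE; split=> [u v | u u_neq0]; rewrite !bE -!bform_mulmx.
  exact: bform_sym.
apply: P_pos; apply: contraNneq u_neq0 => Mu0.
by rewrite -[u]mul1mx -LM -mulmxA Mu0 mulmx0.
Qed.

End BilinearForms.

Section FrameComplexStructure.
Variables (R : realType) (G L J : 'M[R]_4).
Hypotheses (L_frame : L^T *m G *m L = 1%:M) (J_sqr : J *m J = - 1%:M) (J_skew : J^T = - J).

Lemma from_frame_hodge11 W :
  J *m (L^T *m W *m L) = L^T *m W *m L *m J -> hodge11 (from_frame G L J) W.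
Proof. by move=> JW u v; rewrite bform_mulmx from_frame_invariant. Qed.

Lemma from_frame_polarizable Psi : rational_mx Psi -> Psi^T = - Psi ->
  J *m (L^T *m Psi *m L) = L^T *m Psi *m L *m J -> posdefmx (J^T *m (L^T *m Psi *m L)) ->
  polarizable (from_frame G L J).
Proof.
move=> /rational_mx_int_multiple[N N_gt0 N_int] Psi_skew JPsi JPsi_pos.
exists (N%:~R *: Psi); split=> //.
- by rewrite /is_2form linearZ /= Psi_skew scalerN.
- apply: from_frame_hodge11.
  by rewrite -scalemxAr -scalemxAl -scalemxAr -scalemxAl JPsi.
apply: (posdef_bil_frame (posdefmxZ (c := N%:~R) _ JPsi_pos) (mulmx1C L_frame)).
  by rewrite ltr0z.
by move=> u v; rewrite bform_mulmxl -!scalemxAr -scalemxAl from_frame_tr_mul.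
Qed.

End FrameComplexStructure.

Lemma rational_commuting_2form (R : realType) (G B L : 'M[R]_4) :
  L^T *m G *m L = 1%:M -> G^T = G -> rational_mx G -> B^T = - B -> rational_mx B ->
  exists Psi : 'M[R]_4, [/\ rational_mx Psi, Psi^T = - Psi,
    pfaff (L^T *m Psi *m L) != 0 &
    L^T *m Psi *m L *m (L^T *m B *m L) = L^T *m B *m L *m (L^T *m Psi *m L)].
Proof.
move=> L_frame G_sym G_rat B_skew B_rat.
set Z := L^T *m B *m L; have Z_skew : Z^T = - Z := congr_skew L B_skew.
have detL_neq0 : \det L != 0.
  apply: contra_eq_neq (congr1 determinant L_frame) => detL0.
  by rewrite !det_mulmx detL0 mulr0 det1 eq_sym oner_neq0.
have [pfZ|] := eqVneq (pfaff Z) 0; last by exists B.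
have [Z0|Z_neq0] := eqVneq Z 0.
  exists (skew4 1 0 0 0 0 1); split.
  - by apply/rational_mxP; exists (skew4 1 0 0 0 0 1); rewrite map_skew4 rmorph0 rmorph1.
  - exact: tr_skew4.
  - by rewrite pfaff_congr ?tr_skew4 // pfaff_skew4 !(mul0r, mulr0, mulr1, subr0, addr0).
  - by rewrite Z0 mulmx0 mul0mx.
have hodgeB : L^T *m (G *m hodge B *m G) *m L = (\det L)^-1 *: hodge Z.
  have -> : hodge B = (\det L)^-1 *: (L *m hodge Z *m L^T).
    by rewrite hodge_congr // scalerA mulVf // scale1r.
  rewrite -scalemxAr -scalemxAl -scalemxAr -scalemxAl; congr (_ *: _).
  by rewrite !mulmxA L_frame mul1mx -!mulmxA [L^T *m _]mulmxA L_frame mulmx1.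
exists (B + G *m hodge B *m G); split.
- case/rational_mxP: G_rat => QG ->; case/rational_mxP: B_rat => QB ->.
  by apply/rational_mxP; exists (QB + QG *m hodge QB *m QG); rewrite map_mxD !map_mxM map_hodge.
- by rewrite linearD /= !trmx_mul G_sym tr_hodge B_skew mulNmx mulmxN mulmxA opprD.
- rewrite mulmxDr mulmxDl hodgeB pfaff_hodgeD pfZ mulr0 add0r mulf_neq0 ?invr_eq0 //.
  by rewrite sqnorm_eq0.
- rewrite mulmxDr mulmxDl hodgeB mulmxDl mulmxDr -scalemxAl -scalemxAr.
  by rewrite mul_hodge // hodge_mul.
Qed.

Theorem proposition3p4 (R : realType) (G B : 'M[R]_4) :
  is_metric G -> is_2form B -> rational_mx G -> rational_mx B ->
  exists I : 'M[R]_4,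
    [/\ complex_structure I, compatible G I, polarizable I & hodge11 I B].
Proof.
move=> /is_metric_posdefmx G_pos B_skew G_rat B_rat.
have [L L_frame] := posdefmx_frame G_pos.
have [Psi [Psi_rat Psi_skew pfX_neq0 XZ]] :=
  rational_commuting_2form L_frame G_pos.1 G_rat B_skew B_rat.
have [J [J_sqr J_skew J_pos J_comm]] := skew4_polar_cs (congr_skew L Psi_skew) pfX_neq0.
exists (from_frame G L J); split.
- exact: from_frame_sqr.
- by apply: from_frame_hodge11 => //; rewrite L_frame mul1mx mulmx1.
- by apply: (from_frame_polarizable L_frame J_sqr J_skew Psi_rat Psi_skew _ J_pos); apply: J_comm.
- by apply: from_frame_hodge11 => //; apply: J_comm.
Qed.
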